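(* Let $\boldsymbol{\theta}$ be a parameter (scalar or vector) whose treatment effect $\theta=\theta(\boldsymbol{\theta})$ is real-valued, let $\delta\in\mathbb{R}$ be a clinical margin and $c\in(0,1)$. Let $\mathcal{E}=\{\theta>\delta\}$ and $\bar{\mathcal{E}}=\{\theta\le\delta\}$. Let $\pi_{\mathrm{a}}$ (analysis prior) and $\pi_{\mathrm{d}}$ (design prior) be priors on $\boldsymbol{\theta}$, each giving positive probability to both $\mathcal{E}$ and $\bar{\mathcal{E}}$, and let data $\mathcal{D}$ have likelihood $f(\mathcal{D}\mid\boldsymbol{\theta})$. Assume $\pi_{\mathrm{a}}(\boldsymbol{\theta}\mid\mathcal{E})=\pi_{\mathrm{d}}(\boldsymbol{\theta}\mid\mathcal{E})$ and $\pi_{\mathrm{a}}(\boldsymbol{\theta}\mid\bar{\mathcal{E}})=\pi_{\mathrm{d}}(\boldsymbol{\theta}\mid\bar{\mathcal{E}})$. Define the success indicator $\mathcal{S}(\mathcal{D};c)=\mathbb{I}\{\Pr_{\mathrm{a}}(\mathcal{E}\mid\mathcal{D})>c\}$, and the probability of incorrect decision $\mathrm{PID}(c)=\Pr_{\mathrm{d}}(\bar{\mathcal{E}}\mid\mathcal{S}(\mathcal{D};c)=1)$, computed under the joint model $\boldsymbol{\theta}\sim\pi_{\mathrm{d}}$, $\mathcal{D}\mid\boldsymbol{\theta}\sim f$ (assuming $\Pr_{\mathrm{d}}(\mathcal{S}=1)>0$). Let $OE_{\mathrm{d}}=\Pr_{\mathrm{d}}(\mathcal{E})/\Pr_{\mathrm{d}}(\bar{\mathcal{E}})$,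 $OE_{\mathrm{a}}=\Pr_{\mathrm{a}}(\mathcal{E})/\Pr_{\mathrm{a}}(\bar{\mathcal{E}})$ and $R=OE_{\mathrm{d}}/OE_{\mathrm{a}}$. Then $$\mathrm{PID}(c)\le\frac{1}{R\left(\frac{c}{1-c}\right)+1}.$$
   Context: $\Pr_{\mathrm{a}}(\cdot\mid\mathcal{D})$ denotes the posterior under the analysis prior, $\Pr_{\mathrm{a}}$ and $\Pr_{\mathrm{d}}$ prior probabilities under the analysis and design priors; $\pi(\boldsymbol{\theta}\mid\mathcal{E})$ denotes the prior conditioned on the event $\mathcal{E}$. *)

From HB Require Import structures.
From mathcomp Require Import all_boot all_order all_algebra.
From mathcomp Require Import all_classical all_reals all_analysis.
Set Implicit Arguments. Unset Strict Implicit. Unset Printing Implicit Defensive.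
Import Order.TTheory GRing.Theory Num.Theory.
Local Open Scope classical_set_scope.
Local Open Scope ring_scope.

Section BayesDefs.
Context {d1 d2 : measure_display} {T : measurableType d1} {X : measurableType d2}
  {R : realType}.

Definition Pr (P : probability T R) (A : set T) : R := fine (P A).

Definition effect_event (th : T -> R) (delta : R) : set T :=
  [set t | delta < th t].

Definition odds (P : probability T R) (E : set T) : R :=
  Pr P E / Pr P (~` E).

(* Posterior probability of E given data x, under prior P and likelihood
   density f t x (w.r.t. a dominating measure on X), by Bayes' formula. *)
Definition posterior (P : probability T R) (f : T -> X -> R) (E : set T)
  (x : X) : R :=
  fine (\int[P]_(t in E) (f t x)%:E) / fine (\int[P]_t (f t x)%:E).

Definition success (Pa : probability T R) (f : T -> X -> R) (E : set T)
  (c : R) : set X :=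
  [set x | c < posterior Pa f E x].

Definition joint (P : probability T R) (mu : {measure set X -> \bar R})
  (f : T -> X -> R) (B : set T) (C : set X) : \bar R :=
  (\int[P]_(t in B) \int[mu]_(x in C) (f t x)%:E)%E.

Definition PID (Pa Pd : probability T R) (mu : {measure set X -> \bar R})
  (f : T -> X -> R) (E : set T) (c : R) : R :=
  fine (joint Pd mu f (~` E) (success Pa f E c)) /
  fine (joint Pd mu f setT (success Pa f E c)).

End BayesDefs.

From HB Require Import structures.
From mathcomp Require Import all_boot all_order all_algebra.
From mathcomp Require Import all_classical all_reals all_analysis.
From mathcomp Require Import measurable_realfun ring lra.
Import Order.TTheory GRing.Theory Num.Theory.
Local Open Scope classical_set_scope.
Local Open Scope ring_scope.

(* Equal conditional priors mean that on E the analysis prior is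
   the design prior rescaled by wE = Pa(E)/Pd(E), and on ~E rescaled by
   wC = Pa(~E)/Pd(~E).  Writing gE(x), gC(x) for the Pd-integrals of the
   likelihood over E and ~E, the analysis posterior of E at x is
   wE gE / (wE gE + wC gC), so success means gC(x) <= K gE(x) with
   K = (1 - c) wE / (c wC).  Integrating over the success region S (Tonelli)
   gives Pd(~E, S) <= K Pd(E, S), hence PID <= K / (K + 1) = 1 / (K^-1 + 1),
   and K^-1 is exactly R c / (1 - c). *)

Section fubini_tonelli_in.
Local Open Scope ereal_scope.
Context {d1 d2} {T1 : measurableType d1} {T2 : measurableType d2}.
Context {R : realType}.
Variable F : T1 * T2 -> \bar R.
Hypothesis mF : measurable_fun setT F.
Hypothesis F_ge0 : forall p, 0 <= F p.

Let measurable_restrictX B S : measurable B -> measurable S ->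
  measurable_fun setT (F \_ (B `*` S)).
Proof.
move=> mB mS; apply/(measurable_restrictT _ _).1; first exact: measurableX.
exact: measurable_funS mF.
Qed.

Let restrictX_ge0 B S p : 0 <= (F \_ (B `*` S)) p.
Proof. by apply: erestrict_ge0 => q _; exact: F_ge0. Qed.

Lemma integral_restrictX_fst (m1 : {measure set T1 -> \bar R}) B S x :
  \int[m1]_t (F \_ (B `*` S)) (t, x) =
  if x \in S then \int[m1]_(t in B) F (t, x) else 0.
Proof.
case: ifPn => xS; last first.
  by apply: integral0_eq => t _; rewrite /patch in_setX (negbTE xS) andbF.
by rewrite [RHS]integral_mkcond; apply: eq_integral => t _;
  rewrite /patch in_setX xS andbT.
Qed.

Lemma integral_restrictX_snd (m2 : {measure set T2 -> \bar R}) B S t :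
  \int[m2]_x (F \_ (B `*` S)) (t, x) =
  if t \in B then \int[m2]_(x in S) F (t, x) else 0.
Proof.
case: ifPn => tB; last first.
  by apply: integral0_eq => x _; rewrite /patch in_setX (negbTE tB).
by rewrite [RHS]integral_mkcond; apply: eq_integral => x _;
  rewrite /patch in_setX tB.
Qed.

Lemma measurable_fun_integral_in_fst
    (m1 : {sigma_finite_measure set T1 -> \bar R}) B : measurable B ->
  measurable_fun setT (fun x => \int[m1]_(t in B) F (t, x)).
Proof.
move=> mB; rewrite (_ : (fun x => _) = fubini_G m1 (F \_ (B `*` setT))).
  by apply: measurable_fun_fubini_tonelli_G;
    [exact: measurable_restrictX | exact: restrictX_ge0].
by apply/funext => x; rewrite /fubini_G integral_restrictX_fst in_setT.
Qed.

Lemma fubini_tonelli_in (m1 : {sfinite_measure set T1 -> \bar R})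
    (m2 : {sfinite_measure set T2 -> \bar R}) B S :
  measurable B -> measurable S ->
  \int[m1]_(t in B) \int[m2]_(x in S) F (t, x) =
  \int[m2]_(x in S) \int[m1]_(t in B) F (t, x).
Proof.
move=> mB mS; rewrite integral_mkcond [RHS]integral_mkcond.
transitivity (\int[m1]_t \int[m2]_x (F \_ (B `*` S)) (t, x)).
  by apply: eq_integral => t _; rewrite integral_restrictX_snd /patch.
rewrite (sfinite_Fubini _ _ _ (restrictX_ge0 B S));
  last exact: measurable_restrictX.
by apply: eq_integral => x _; rewrite integral_restrictX_fst /patch.
Qed.

End fubini_tonelli_in.

Lemma ltr_pdivlMr_nneg (R : realFieldType) (c n m : R) : 0 < c -> 0 <= m ->
  (c < n / m) = (0 < m) && (c * m < n).
Proof.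
move=> c_gt0 m_ge0; have [->|m_neq0] := eqVneq m 0.
  by rewrite invr0 mulr0 ltxx ltNge (ltW c_gt0).
have m_gt0 : 0 < m by rewrite lt0r m_neq0.
by rewrite m_gt0 ltr_pdivlMr.
Qed.

Lemma le_odds_of_gt_ratio (R : realType) (k k' c : R) (u v : \bar R) :
  0 < k -> 0 < k' -> 0 < c -> (0 <= u)%E -> (0 <= v)%E ->
  c < fine (k%:E * u) / fine (k%:E * u + k'%:E * v) ->
  (v <= ((1 - c) * k / (c * k'))%:E * u)%E.
Proof.
move=> k0 k'0 c0.
have not_gt_0div (r : R) : c < 0 / r -> false.
  by rewrite mul0r => /(lt_trans c0); rewrite ltxx.
have not_gt_div0 (r : R) : c < r / 0 -> false.
  by rewrite invr0 mulr0 => /(lt_trans c0); rewrite ltxx.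
case: u => [u| |]; case: v => [v| |] => u0 v0.
- rewrite !lee_fin in u0 v0; rewrite -!EFinM -EFinD lee_fin /= => gt_c.
  have [den0|den_neq0] := eqVneq (k * u + k' * v) 0.
    by move: gt_c; rewrite den0 => /not_gt_div0.
  have den_gt0 : 0 < k * u + k' * v.
    by rewrite lt0r den_neq0 addr_ge0 // mulr_ge0 // ltW.
  move: gt_c; rewrite ltr_pdivlMr // => odds_gt.
  rewrite mulrAC ler_pdivlMr ?mulr_gt0 //.
  apply: ltW; nra.
(* With [u] or [v] infinite, [fine] sends the numerator or the denominator
   to 0 (and [x / 0 = 0]), so the ratio cannot exceed [c]. *)
- by rewrite mulry gtr0_sg // mul1e addey // => /not_gt_div0.
- by rewrite leNye.
- by rewrite mulry gtr0_sg // mul1e => /not_gt_0div.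
- by rewrite mulry gtr0_sg // mul1e => /not_gt_0div.
- by rewrite leNye.
- by move: u0; rewrite leeNy_eq.
- by move: u0; rewrite leeNy_eq.
- by rewrite leNye.
Qed.

Lemma ratio_le_of_le_mul (R : realFieldType) (j0 j1 K : R) :
  0 < j0 + j1 -> 0 < K -> j0 <= K * j1 ->
  j0 / (j0 + j1) <= 1 / (K^-1 + 1).
Proof.
move=> j_gt0 K_gt0 j0_le.
have Kinv1_gt0 : 0 < K^-1 + 1 by rewrite addr_gt0 ?invr_gt0.
by rewrite ler_pdivrMr // mulrAC ler_pdivlMr // mul1r mulrDr mulr1 addrC lerD2l
  ler_pdivrMr // mulrC.
Qed.

Section conditional_prior.
Local Open Scope ereal_scope.
Context {d} {T : measurableType d} {R : realType}.

Lemma EFin_Pr (P : probability T R) A : measurable A -> (Pr P A)%:E = P A.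
Proof. by move=> mA; rewrite fineK // fin_num_measure. Qed.

Lemma Pr_gt0 (P : probability T R) A :
  measurable A -> 0 < P A -> (0 < Pr P A)%R.
Proof. by move=> mA; rewrite -(EFin_Pr P _ mA) lte_fin. Qed.

Lemma ge0_integral_equal_conditional (Pa Pd : probability T R) B
    (h : T -> \bar R) : measurable B -> 0 < Pa B -> 0 < Pd B ->
  (forall A, measurable A ->
     Pr Pa (A `&` B) / Pr Pa B = Pr Pd (A `&` B) / Pr Pd B)%R ->
  measurable_fun B h -> (forall t, B t -> 0 <= h t) ->
  \int[Pa]_(t in B) h t = (Pr Pa B / Pr Pd B)%:E * \int[Pd]_(t in B) h t.
Proof.
move=> mB PaB PdB condB mh h0.
have PaB_neq0 : Pr Pa B != 0%R by rewrite gt_eqF // Pr_gt0.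
have PdB_neq0 : Pr Pd B != 0%R by rewrite gt_eqF // Pr_gt0.
have w_ge0 : (0 <= Pr Pa B / Pr Pd B)%R by rewrite divr_ge0 // fine_ge0.
rewrite (eq_measure_integral (mscale (NngNum w_ge0) Pd));
  first by rewrite ge0_integral_mscale.
move=> A mA AB; change (Pa A = (Pr Pa B / Pr Pd B)%:E * Pd A).
rewrite -(EFin_Pr Pa _ mA) -(EFin_Pr Pd _ mA) -EFinM; congr EFin.
have := condB A mA; rewrite setIidl // => condA.
by rewrite -(divfK PaB_neq0 (Pr Pa A)) condA; field.
Qed.

End conditional_prior.

Definition evidence {d1 d2} {T : measurableType d1} {X : measurableType d2}
  {R : realType} (P : {measure set T -> \bar R}) (f : T -> X -> R)
  (B : set T) (x : X) : \bar R :=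
  (\int[P]_(t in B) (f t x)%:E)%E.

Section evidence.
Local Open Scope ereal_scope.
Context {d1 d2} {T : measurableType d1} {X : measurableType d2} {R : realType}.
Context {f : T -> X -> R}.
Hypothesis mf : measurable_fun setT (fun p : T * X => f p.1 p.2).
Hypothesis f_ge0 : forall t x, (0 <= f t x)%R.

Let mF : measurable_fun setT (fun p : T * X => (f p.1 p.2)%:E).
Proof. exact/measurable_EFinP. Qed.

Let F_ge0 (p : T * X) : 0 <= (f p.1 p.2)%:E.
Proof. by rewrite lee_fin. Qed.

Lemma evidence_ge0 (P : {measure set T -> \bar R}) B x : 0 <= evidence P f B x.
Proof. by apply: integral_ge0 => t _; rewrite lee_fin. Qed.

Lemma measurable_evidence (P : {sigma_finite_measure set T -> \bar R}) B :
  measurable B -> measurable_fun setT (evidence P f B).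
Proof. exact: (measurable_fun_integral_in_fst _ mF F_ge0 P). Qed.

Lemma evidence_setT (P : {measure set T -> \bar R}) E x : measurable E ->
  evidence P f setT x = evidence P f E x + evidence P f (~` E) x.
Proof.
move=> mE; rewrite /evidence -(setUCr E) ge0_integral_setU //.
- exact: measurableC.
- by rewrite setUCr; exact: measurable_fun_pair1 mF.
- by move=> t _; rewrite lee_fin.
- by rewrite disj_set2E setICr.
Qed.

Lemma joint_evidence (P : probability T R)
    (mu : {sfinite_measure set X -> \bar R}) B S :
  measurable B -> measurable S ->
  joint P mu f B S = \int[mu]_(x in S) evidence P f B x.
Proof. exact: (fubini_tonelli_in _ mF F_ge0 P mu). Qed.

Lemma joint_setT (P : probability T R) (mu : {sfinite_measure set X -> \bar R})
    E S : measurable E -> measurable S ->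
  joint P mu f setT S = joint P mu f E S + joint P mu f (~` E) S.
Proof.
move=> mE mS; have mCE := measurableC mE.
rewrite !joint_evidence //.
under eq_integral => x _ do rewrite (evidence_setT _ _ x mE).
apply: ge0_integralD => //; do ?[by move=> x _; exact: evidence_ge0].
- exact: measurable_funS measurableT (subsetT S) (measurable_evidence P _ mE).
- exact: measurable_funS measurableT (subsetT S) (measurable_evidence P _ mCE).
Qed.

Lemma joint_setTT (P : probability T R)
    (mu : {sfinite_measure set X -> \bar R}) :
  (forall t, \int[mu]_x (f t x)%:E = 1) -> joint P mu f setT setT = 1.
Proof.
move=> f1; rewrite /joint; under eq_integral => t _ do rewrite f1.
by rewrite integral_cst // mul1e; exact: probability_setT.
Qed.

Lemma joint_le1 (P : probability T R)
    (mu : {sfinite_measure set X -> \bar R}) S :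
  (forall t, \int[mu]_x (f t x)%:E = 1) -> measurable S ->
  joint P mu f setT S <= 1.
Proof.
move=> f1 mS; rewrite -(joint_setTT P mu f1) !joint_evidence //.
apply: ge0_subset_integral => //; first exact: measurable_evidence.
by move=> x _; exact: evidence_ge0.
Qed.

Lemma measurable_success (P : probability T R) E c :
  measurable E -> (0 < c)%R -> measurable (success P f E c).
Proof.
move=> mE c_gt0.
pose num x := fine (evidence P f E x); pose den x := fine (evidence P f setT x).
have mnum : measurable_fun setT num.
  exact: measurableT_comp (fine_measurable _) (measurable_evidence P _ mE).
have mden : measurable_fun setT den.
  exact: measurableT_comp (fine_measurable _)
    (measurable_evidence P _ measurableT).
have -> : success P f E c = [set x | (0 < den x) && (c * den x < num x)]%R.
  apply/funext => x; rewrite /success /posterior /= ltr_pdivlMr_nneg //.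
  exact/fine_ge0/evidence_ge0.
have mS : measurable_fun setT (fun x => (0 < den x) && (c * den x < num x))%R.
  apply: measurable_and; apply: measurable_fun_ltr => //.
  exact: measurable_funM.
by rewrite -[X in measurable X]setTI; exact: mS measurableT [set true] I.
Qed.

End evidence.

Section design_and_analysis_priors.
Local Open Scope ereal_scope.
Context {d1 d2} {T : measurableType d1} {X : measurableType d2} {R : realType}.
Variables (Pa Pd : probability T R) (f : T -> X -> R) (E : set T) (c : R).
Hypothesis mf : measurable_fun setT (fun p : T * X => f p.1 p.2).
Hypothesis f_ge0 : forall t x, (0 <= f t x)%R.
Hypothesis mE : measurable E.
Hypothesis c01 : (0 < c < 1)%R.
Hypotheses (PaE : 0 < Pa E) (PaCE : 0 < Pa (~` E)).
Hypotheses (PdE : 0 < Pd E) (PdCE : 0 < Pd (~` E)).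
Hypothesis condE : forall A, measurable A ->
  (Pr Pa (A `&` E) / Pr Pa E = Pr Pd (A `&` E) / Pr Pd E)%R.
Hypothesis condCE : forall A, measurable A ->
  (Pr Pa (A `&` ~` E) / Pr Pa (~` E) = Pr Pd (A `&` ~` E) / Pr Pd (~` E))%R.

Let mCE : measurable (~` E). Proof. exact: measurableC. Qed.
Let c_gt0 : (0 < c)%R. Proof. by case/andP: c01. Qed.
Let c_lt1 : (c < 1)%R. Proof. by case/andP: c01. Qed.

Let wE := (Pr Pa E / Pr Pd E)%R.
Let wC := (Pr Pa (~` E) / Pr Pd (~` E))%R.
Let K := ((1 - c) * wE / (c * wC))%R.

Let wE_gt0 : (0 < wE)%R. Proof. by rewrite divr_gt0 // Pr_gt0. Qed.
Let wC_gt0 : (0 < wC)%R. Proof. by rewrite divr_gt0 // Pr_gt0. Qed.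
Let K_gt0 : (0 < K)%R.
Proof. by apply: divr_gt0; rewrite mulr_gt0 ?subr_gt0. Qed.

Let evidence_analysis B x : measurable B -> 0 < Pa B -> 0 < Pd B ->
  (forall A, measurable A ->
     Pr Pa (A `&` B) / Pr Pa B = Pr Pd (A `&` B) / Pr Pd B)%R ->
  evidence Pa f B x = (Pr Pa B / Pr Pd B)%:E * evidence Pd f B x.
Proof.
move=> mB PaB PdB condB; apply: ge0_integral_equal_conditional => //.
- apply: measurable_funS measurableT (subsetT B) _.
  by apply/measurable_EFinP; exact: measurable_fun_pair1 mf.
- by move=> t _; rewrite lee_fin.
Qed.

Lemma success_odds_le x : success Pa f E c x ->
  evidence Pd f (~` E) x <= K%:E * evidence Pd f E x.
Proof.
move=> Sx.
have : (c < fine (evidence Pa f E x) / fine (evidence Pa f setT x))%R := Sx.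
rewrite (evidence_setT mf f_ge0 _ _ _ mE) !evidence_analysis // => gt_c.
by apply: le_odds_of_gt_ratio gt_c => //; exact: (evidence_ge0 f_ge0 Pd).
Qed.

Lemma joint_odds_le (mu : {sfinite_measure set X -> \bar R}) :
  joint Pd mu f (~` E) (success Pa f E c) <=
  K%:E * joint Pd mu f E (success Pa f E c).
Proof.
set S := success Pa f E c.
have mS : measurable S by exact: (measurable_success mf f_ge0).
have ev_ge0 B x : S x -> 0 <= evidence Pd f B x.
  by move=> _; exact: (evidence_ge0 f_ge0).
have mev B : measurable B -> measurable_fun S (evidence Pd f B).
  move=> mB; apply: measurable_funS measurableT (subsetT S) _.
  exact: (measurable_evidence mf f_ge0).
rewrite !joint_evidence // -ge0_integralZl_EFin ?(ltW K_gt0) //; last 2 first.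
- exact: ev_ge0.
- exact: mev.
apply: ge0_le_integral => //.
- exact: ev_ge0.
- exact: mev.
- by apply: emeasurable_funM; [exact: measurable_cst | exact: mev].
- by move=> x; exact: success_odds_le.
Qed.

Lemma odds_ratio_critical :
  (odds Pd E / odds Pa E * (c / (1 - c)) = K^-1)%R.
Proof.
have c_neq0 : c != 0%R by rewrite gt_eqF.
have c1_neq0 : (1 - c != 0)%R by rewrite subr_eq0 gt_eqF.
have [aE aC pE pC] : [/\ Pr Pa E != 0, Pr Pa (~` E) != 0,
                        Pr Pd E != 0 & Pr Pd (~` E) != 0]%R.
  by split; rewrite gt_eqF // Pr_gt0.
by rewrite /odds /K /wE /wC; field; rewrite aE aC pE pC c_neq0 c1_neq0.
Qed.

Lemma PID_le (mu : {sfinite_measure set X -> \bar R}) :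
  (forall t, \int[mu]_x (f t x)%:E = 1) ->
  0 < joint Pd mu f setT (success Pa f E c) ->
  (PID Pa Pd mu f E c <= 1 / (odds Pd E / odds Pa E * (c / (1 - c)) + 1))%R.
Proof.
move=> f1; set S := success Pa f E c => S_pos.
have mS : measurable S by exact: (measurable_success mf f_ge0).
have J_split := joint_setT mf f_ge0 Pd mu _ _ mE mS.
have J_le1 := joint_le1 mf f_ge0 Pd mu _ f1 mS.
have J_ge0 B : 0 <= joint Pd mu f B S.
  by apply: integral_ge0 => t _; apply: integral_ge0 => x _; rewrite lee_fin.
have finE : joint Pd mu f E S \is a fin_num.
  rewrite ge0_fin_numE // (le_lt_trans _ (le_lt_trans J_le1 (ltry 1))) //.
  by rewrite J_split leeDl.
have finC : joint Pd mu f (~` E) S \is a fin_num.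
  rewrite ge0_fin_numE // (le_lt_trans _ (le_lt_trans J_le1 (ltry 1))) //.
  by rewrite J_split leeDr.
rewrite /PID -/S J_split (fineD finE finC) addrC odds_ratio_critical.
apply: ratio_le_of_le_mul => //.
- move: S_pos; rewrite J_split -(fineK finE) -(fineK finC) -EFinD lte_fin.
  by rewrite addrC.
- by rewrite -lee_fin EFinM !fineK //; exact: joint_odds_le.
Qed.

End design_and_analysis_priors.

Lemma measurable_effect_event {d} {T : measurableType d} {R : realType}
    (th : T -> R) (delta : R) :
  measurable_fun setT th -> measurable (effect_event th delta).
Proof.
move=> mth; rewrite (_ : effect_event th delta = th @^-1` `]delta, +oo[).
  rewrite -[X in measurable X]setTI.
  exact: mth measurableT _ (measurable_itv _).
by apply/seteqP; split => t; rewrite /effect_event /= in_itv /= andbT.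
Qed.

Theorem theorem1 (d1 d2 : measure_display) (T : measurableType d1)
  (X : measurableType d2) (R : realType)
  (th : T -> R) (delta c : R)
  (Pa Pd : probability T R) (mu : {measure set X -> \bar R})
  (f : T -> X -> R) :
  measurable_fun setT th ->
  0 < c < 1 ->
  (* likelihood: a jointly measurable probability density w.r.t. mu *)
  sigma_finite setT mu ->
  measurable_fun setT (fun p : T * X => f p.1 p.2) ->
  (forall t x, 0 <= f t x) ->
  (forall t, (\int[mu]_x (f t x)%:E = 1)%E) ->
  (* both priors charge E and its complement *)
  (0 < Pa (effect_event th delta))%E ->
  (0 < Pa (~` effect_event th delta))%E ->
  (0 < Pd (effect_event th delta))%E ->
  (0 < Pd (~` effect_event th delta))%E ->
  (* equal conditional priors given E and given not E *)
  (forall A, measurable A ->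
     Pr Pa (A `&` effect_event th delta) / Pr Pa (effect_event th delta) =
     Pr Pd (A `&` effect_event th delta) / Pr Pd (effect_event th delta)) ->
  (forall A, measurable A ->
     Pr Pa (A `&` ~` effect_event th delta) / Pr Pa (~` effect_event th delta) =
     Pr Pd (A `&` ~` effect_event th delta) / Pr Pd (~` effect_event th delta)) ->
  (* Pr_d(S = 1) > 0 *)
  (0 < joint Pd mu f setT (success Pa f (effect_event th delta) c))%E ->
  PID Pa Pd mu f (effect_event th delta) c <=
    1 / ((odds Pd (effect_event th delta) / odds Pa (effect_event th delta))
          * (c / (1 - c)) + 1).
Proof.
move=> mth c01 mu_sigma mf f_ge0 f1 PaE PaCE PdE PdCE condE condCE S_pos.
pose mu_sf : {sfinite_measure set X -> \bar R} :=
  HB.pack_for (SFiniteMeasure.type X R) (Measure.sort mu)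
    (isSFinite.Build _ _ _ mu (sfinite_measure_sigma_finite mu_sigma)).
exact (PID_le _ _ _ _ _ mf f_ge0 (measurable_effect_event th delta mth) c01
  PaE PaCE PdE PdCE condE condCE mu_sf f1 S_pos).
Qed.
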